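(* For any multi-stage concurrent game structure $\mathcal{G}$, any set of agents $A$ of $\mathcal{G}$ and any quantifier-free $\texttt{HyperATL}^*$ formula $\varphi$ over path variables $\pi_1,\pi_2$: if $\mathcal{G}\models[\forall\pi_1.\langle\langle A\rangle\rangle\pi_2.]\,\varphi$ then $\mathcal{G}\models\forall\pi_1.\langle\langle A\rangle\rangle\pi_2.\,\varphi$.
   Context: A multi-stage concurrent game structure (MSCGS) is $\mathcal{G}=(S,s_0,\Xi,\mathscr{M},\delta,d,\mathbf{AP},\ell)$: finite states $S$, initial state $s_0$, finite agents $\Xi$, finite moves $\mathscr{M}$, transition function $\delta:S\times(\Xi\to\mathscr{M})\to S$, stage function $d:\Xi\to\mathbb{N}$, atomic propositions $\mathbf{AP}$, labelling $\ell:S\to2^{\mathbf{AP}}$. Quantifier-free formulas are built from $a_\pi$ ($a\in\mathbf{AP}$), Boolean connectives, $\bigcirc$ and $\mathcal{U}$, and are evaluated synchronously on a path assignment ($a_\pi$: $a$ holds in the current state of the path bound to $\pi$). Sequential semantics: a strategy for $\xi$ is $f_\xi:S^+\times(\{\xi'\mid d(\xi')<d(\xi)\}\to\mathscr{M})\to\mathscr{M}$; $\mathit{out}(\mathcal{G},s,F_A)$ is the set of $u\in S^\omega$ with $u(0)=s$ such that for all $i$ there is a global move vector $\sigma$ with $\delta(u(i),\sigma)=u(i+1)$ and $\sigma(\xi)=f_\xi(u[0,i],\sigma_{\mid\{\xi'\mid d(\xi')<d(\xi)\}})$ for all $\xi\in A$. $\Pi\models\langle\langle A\rangle\rangle\pi.\psi$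 iff there exist strategies $F_A$ for the agents in $A$ such that for all $t\in\mathit{out}(\mathcal{G},\Pi(\epsilon)(0),F_A)$, $\Pi[\pi\mapsto t]\models\psi$, where $\Pi(\epsilon)$ is the most recently added path ($\Pi(\epsilon)(0)=s_0$ if $\Pi$ is empty); $\forall\pi$ abbreviates $\langle\langle\emptyset\rangle\rangle\pi$. Thus $\forall\pi_1.\langle\langle A\rangle\rangle\pi_2.\varphi$ means: for every path $t_1$ from $s_0$, the agents in $A$ have strategies (whose choice may depend on $t_1$) such that every outcome $t_2$ from $s_0$ satisfies $\varphi$ together with $t_1$. Parallel semantics: $[\forall\pi_1.\langle\langle A\rangle\rangle\pi_2.]\varphi$ holds (from the empty assignment) iff there are strategies for the agents $\xi\in A$ in copy $2$, each mapping a finite history in $(S\times S)^+$ of pairs of states of both copies, together with the moves already fixed for all agents of stage $<d(\xi)$ in both copies, to a move, such that every outcome $u\in(S\times S)^\omega$ — i.e. $u(0)=(s_0,s_0)$ and for every $i$ there are global move vectors $\sigma_1,\sigma_2$ with $u(i+1)=(\delta(u(i)_1,\sigma_1),\delta(u(i)_2,\sigma_2))$ and $\sigma_2(\xi)$ given by the strategy of $\xi$ for every $\xi\in A$ — satisfies $\varphi$ under $\pi_1\mapsto$ first components, $\pi_2\mapsto$ second components. *)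

From mathcomp Require Import all_boot.
Set Implicit Arguments. Unset Strict Implicit. Unset Printing Implicit Defensive.

(* Multi-stage concurrent game structure G = (S, s0, Xi, M, delta, d, AP, l). *)
Record mscgs := MSCGS {
  St : finType;
  s0 : St;
  Ag : finType;
  Mv : finType;
  delta : St -> (Ag -> Mv) -> St;
  stage : Ag -> nat;
  AP : finType;
  lab : St -> AP -> bool
}.

Inductive pvar := Pi1 | Pi2.

Inductive qf (ap : Type) :=
| QAtom of ap & pvar
| QNot of qf ap
| QAnd of qf ap & qf ap
| QOr of qf ap & qf ap
| QNext of qf ap
| QUntil of qf ap & qf ap.

Fixpoint qf_sat (G : mscgs) (t1 t2 : nat -> St G) (i : nat) (f : qf (AP G)) : Prop :=
  match f with
  | QAtom a Pi1 => lab (t1 i) a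
  | QAtom a Pi2 => lab (t2 i) a
  | QNot g => ~ qf_sat t1 t2 i g
  | QAnd g h => qf_sat t1 t2 i g /\ qf_sat t1 t2 i h
  | QOr g h => qf_sat t1 t2 i g \/ qf_sat t1 t2 i h
  | QNext g => qf_sat t1 t2 i.+1 g
  | QUntil g h => exists k, i <= k /\ qf_sat t1 t2 k h /\
                  (forall j, i <= j -> j < k -> qf_sat t1 t2 j g)
  end.

Definition lower (G : mscgs) (xi : Ag G) := {x : Ag G | stage x < stage xi}.

Definition restr (G : mscgs) (xi : Ag G) (sigma : Ag G -> Mv G) : lower xi -> Mv G :=
  fun x => sigma (sval x).
Arguments restr {G} xi sigma _.

Definition prefix (T : Type) (u : nat -> T) (i : nat) : seq T := mkseq u i.+1.

Definition strat (G : mscgs) (xi : Ag G) := seq (St G) -> (lower xi -> Mv G) -> Mv G.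

Definition out (G : mscgs) (s : St G) (A : {set Ag G}) (F : forall xi, strat xi)
  (u : nat -> St G) : Prop :=
  u 0 = s /\
  forall i, exists sigma : Ag G -> Mv G,
    delta (u i) sigma = u i.+1 /\
    forall xi, xi \in A -> sigma xi = F xi (prefix u i) (restr xi sigma).

(* out(G, s, F_emptyset): all paths from s (no agent constrained) *)
Definition out_all (G : mscgs) (s : St G) (u : nat -> St G) : Prop :=
  u 0 = s /\ forall i, exists sigma : Ag G -> Mv G, delta (u i) sigma = u i.+1.

(* forall pi1. <<A>> pi2. phi  (from the empty assignment) *)
Definition seq_sat (G : mscgs) (A : {set Ag G}) (phi : qf (AP G)) : Prop :=
  forall t1, out_all (s0 G) t1 ->
  exists F : forall xi, strat xi,
    forall t2, out (s0 G) A F t2 -> qf_sat t1 t2 0 phi.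

(* strategy for agent xi in copy 2: history in (S x S)^+, plus already fixed
   lower-stage moves of copy 1 and of copy 2 *)
Definition pstrat (G : mscgs) (xi : Ag G) :=
  seq (St G * St G) -> (lower xi -> Mv G) -> (lower xi -> Mv G) -> Mv G.

Definition pout (G : mscgs) (A : {set Ag G}) (F : forall xi, pstrat xi)
  (u : nat -> St G * St G) : Prop :=
  u 0 = (s0 G, s0 G) /\
  forall i, exists sigma1 sigma2 : Ag G -> Mv G,
    u i.+1 = (delta (u i).1 sigma1, delta (u i).2 sigma2) /\
    forall xi, xi \in A ->
      sigma2 xi = F xi (prefix u i) (restr xi sigma1) (restr xi sigma2).

(* [forall pi1. <<A>> pi2.] phi *)
Definition par_sat (G : mscgs) (A : {set Ag G}) (phi : qf (AP G)) : Prop :=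
  exists F : forall xi, pstrat xi,
    forall u, pout A F u -> qf_sat (fun i => (u i).1) (fun i => (u i).2) 0 phi.

From Pilot Require Import Defs.
From mathcomp Require Import all_boot.
From Stdlib Require Import ClassicalEpsilon.

Set Implicit Arguments.
Unset Strict Implicit.
Unset Printing Implicit Defensive.

(* In the sequential semantics the path [t1] is fixed before the agents of [A]
   choose their strategies, so they may hard-wire [t1] together with one move
   vector [sigma1 i] realising each of its steps.  An agent then plays the
   parallel strategy on the history obtained by zipping the prefix of [t1] with
   its own history, feeding it the lower-stage moves of [sigma1] as the
   first-copy moves.  Pairing [t1] with any sequential outcome [t2] yields a
   parallel outcome, which satisfies [phi] by assumption. *)

(* [Defs.prefix] is qualified because [seq.prefix] shadows it. *)
Lemma zip_prefix (T1 T2 : Type) (u1 : nat -> T1) (u2 : nat -> T2) i :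
  zip (Defs.prefix u1 i) (Defs.prefix u2 i) = Defs.prefix (fun k => (u1 k, u2 k)) i.
Proof. by rewrite /Defs.prefix /mkseq zip_map. Qed.

Section ParallelToSequential.

Variables (G : mscgs) (A : {set Ag G}).

Lemma out_all_moves (s : St G) (t : nat -> St G) :
  out_all s t -> exists sigma : nat -> Ag G -> Mv G,
    forall i, delta (t i) (sigma i) = t i.+1.
Proof. by case=> _; apply: ClassicalEpsilon.choice. Qed.

Definition seq_of_pstrat (t1 : nat -> St G) (sigma1 : nat -> Ag G -> Mv G)
    (xi : Ag G) (F : pstrat xi) : strat xi :=
  fun h low2 =>
    let i := (size h).-1 in F (zip (Defs.prefix t1 i) h) (restr xi (sigma1 i)) low2.

Lemma pout_zip_out (F : forall xi, pstrat xi) (t1 t2 : nat -> St G)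
    (sigma1 : nat -> Ag G -> Mv G) :
  t1 0 = s0 G -> (forall i, delta (t1 i) (sigma1 i) = t1 i.+1) ->
  out (s0 G) A (fun xi => seq_of_pstrat t1 sigma1 (F xi)) t2 ->
  pout A F (fun i => (t1 i, t2 i)).
Proof.
move=> t10 t1_moves [t20 t2_step]; split=> [|i]; first by rewrite t10 t20.
have [sigma2 [t2_move sigma2_strat]] := t2_step i.
exists (sigma1 i), sigma2; split=> [|xi xiA] /=; first by rewrite t1_moves t2_move.
by rewrite sigma2_strat // /seq_of_pstrat size_mkseq zip_prefix.
Qed.

End ParallelToSequential.

Theorem mainTheorem7 (G : mscgs) (A : {set Ag G}) (phi : qf (AP G)) :
  par_sat A phi -> seq_sat A phi.
Proof.
move=> [F F_wins] t1 t1_out.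
have [sigma1 t1_moves] := out_all_moves t1_out.
exists (fun xi => seq_of_pstrat t1 sigma1 (F xi)) => t2 t2_out.
exact: (F_wins _ (pout_zip_out t1_out.1 t1_moves t2_out)).
Qed.
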